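(* Let $\Delta>0$, $h>0$, $\alpha\ge 2$, $\mathrm{psd}_{\max}>0$, $\sigma^2>0$. For integers $i,j$ with $i\equiv j \pmod 2$ place a satellite at $\mathbf{s}_{i,j}=(i\Delta/2,\ j\Delta\sqrt3/2,\ h)$, and consider a ground user at $\mathbf{g}=(x,y,0)$, served by the satellite $\mathbf{s}_{0,0}$. Define $D_{i,j}(x,y)=\|\mathbf{s}_{i,j}-\mathbf{g}\|$, $\theta_{i,j}(x,y)=\cos^{-1}\bigl(h/D_{i,j}(x,y)\bigr)$, and $W_{i,j}(x,y)=w_s(\theta_{i,j}(x,y))\,w_g(\theta_{i,j}(x,y))$, where $w_s,w_g:[0,\pi]\to(0,1]$ are the (normalized) satellite and ground antenna patterns. Let $\mathcal{I}=\{(i,j)\in\mathbb{Z}^2: i\equiv j \pmod 2\}\setminus\{(0,0)\}$ and $$\mathrm{SNR}(x,y)=\frac{\mathrm{psd}_{\max}}{\sigma^2}D_{0,0}^{-\alpha}(x,y)W_{0,0}(x,y),\quad \mathrm{INR}(x,y)=\frac{\mathrm{psd}_{\max}}{\sigma^2}\sum_{(i,j)\in\mathcal{I}}D_{i,j}^{-\alpha}(x,y)W_{i,j}(x,y),$$ (assumed finite), and $\mathrm{SINR}(x,y)=\mathrm{SNR}(x,y)/(\mathrm{INR}(x,y)+1)$. Suppose (1) $\theta\mapsto w_s(\theta)w_g(\theta)$ is monotone decreasing on $[0,\pi]$, and (2) for every $(i,j)$ with $i\equiv j\pmod 2$, the ratio $W_{i,j}(x,y)/W_{0,0}(x,y)$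 is convex in $x$ and convex in $y$ on the region $-\Delta/2\le x\le\Delta/2$, $-\Delta\sqrt3/2\le y\le \Delta\sqrt3/2$. Then $\mathrm{SINR}(x,y)$ is maximized over $(x,y)\in\mathbb{R}^2$ at $(x,y)=(0,0)$.
   Context: Planar model of a LEO downlink: satellites lie on a hexagonal lattice in the plane at altitude $h$ above the ground plane, all satellite antennas point straight down and all ground antennas point straight up, so the off-axis angle at both ends of a link is $\theta_{i,j}(x,y)$. All satellites transmit at power spectral density $\mathrm{psd}_{\max}$. *)

From mathcomp Require Import all_boot all_order all_algebra.
From mathcomp Require Import all_classical all_reals all_analysis.
Set Implicit Arguments. Unset Strict Implicit. Unset Printing Implicit Defensive.
Import Order.TTheory GRing.Theory Num.Theory.
Local Open Scope ring_scope.
Local Open Scope classical_set_scope.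

Section Model.
Variable R : realType.

Definition sat_x (Delta : R) (i : int) : R := i%:~R * Delta / 2.
Definition sat_y (Delta : R) (j : int) : R := j%:~R * Delta * Num.sqrt 3 / 2.

Definition Dist (Delta h : R) (i j : int) (x y : R) : R :=
  Num.sqrt ((sat_x Delta i - x) ^+ 2 + (sat_y Delta j - y) ^+ 2 + h ^+ 2).

Definition theta (Delta h : R) (i j : int) (x y : R) : R :=
  acos (h / Dist Delta h i j x y).

Definition Wgain (ws wg : R -> R) (Delta h : R) (i j : int) (x y : R) : R :=
  ws (theta Delta h i j x y) * wg (theta Delta h i j x y).

Definition lattice : set (int * int) :=
  [set p | (p.1 - p.2 = 0 %[mod 2])%Z].

Definition interferers : set (int * int) := lattice `\ (0%Z, 0%Z).

Definition SNR (psd sigma2 alpha : R) (ws wg : R -> R) (Delta h : R) (x y : R) : R :=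
  psd / sigma2 * (powR (Dist Delta h 0 0 x y) (- alpha) * Wgain ws wg Delta h 0 0 x y).

(* the interference sum, as an extended real (sum of nonnegative terms) *)
Definition INR_sum (psd sigma2 alpha : R) (ws wg : R -> R) (Delta h : R) (x y : R)
  : \bar R :=
  (\esum_(p in interferers)
     (psd / sigma2 * (powR (Dist Delta h p.1 p.2 x y) (- alpha)
                        * Wgain ws wg Delta h p.1 p.2 x y))%:E)%E.

Definition INR (psd sigma2 alpha : R) (ws wg : R -> R) (Delta h : R) (x y : R) : R :=
  fine (INR_sum psd sigma2 alpha ws wg Delta h x y).

Definition SINR (psd sigma2 alpha : R) (ws wg : R -> R) (Delta h : R) (x y : R) : R :=
  SNR psd sigma2 alpha ws wg Delta h x y / (INR psd sigma2 alpha ws wg Delta h x y + 1).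

Definition convex_on (f : R -> R) (a b : R) : Prop :=
  forall u v t : R, a <= u <= b -> a <= v <= b -> 0 <= t <= 1 ->
    f (t * u + (1 - t) * v) <= t * f u + (1 - t) * f v.

End Model.

From mathcomp Require Import all_boot all_order all_algebra.
From mathcomp Require Import all_classical all_reals all_analysis.
From mathcomp Require Import ring lra zify.
Import Order.TTheory GRing.Theory Num.Theory.
Local Open Scope ring_scope.
Local Open Scope classical_set_scope.

(* Up to the factor [psd/sigma2], the power received from a satellite at distance [d]
   is [d^-alpha W(d)], a product of two functions decreasing in [d].  For a user in
   the rectangular cell around the serving satellite, average each interferer over
   the four mirror images [(+-x, +-y)] of the user: the convexity hypotheses bound the
   antenna factor, convexity of [s |-> s^(-alpha/2)] applied to the squared distances
   bounds the path loss, and Chebyshev's sum inequality combines the two.  Against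
   the centre of the cell this gives [S(x,y) I(0,0) <= S(0,0) I(x,y)], and since the
   signal [S] is also largest at the centre the SINR is maximal there.  Any other
   user is moved into such a cell by a lattice translation that does not lengthen
   its serving link; translations preserve the total received power [S + I], so the
   SINR does not decrease. *)

Section RealInequalities.
Context {R : realType}.

Lemma powRN_tangent (k m t : R) : 0 <= k -> 0 < m -> 0 < t ->
  m `^ (- k) * (1 - k * (t / m - 1)) <= t `^ (- k).
Proof.
move=> k0 m0 t0.
have bernoulli z : 0 < z -> 1 - k * (z - 1) <= z `^ (- k).
  move=> z0; rewrite /powR gt_eqF //.
  have lnz : ln z <= z - 1 by have := expR_ge1Dx (ln z); rewrite lnK ?posrE //; lra.
  by apply: le_trans (expR_ge1Dx _); rewrite mulNr; nra.
have tmE : t = m * (t / m) by rewrite mulrC divfK ?gt_eqF.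
rewrite [in X in _ <= X]tmE (powRM _ (ltW m0) (ltW (divr_gt0 t0 m0))).
rewrite ler_pM2l ?powR_gt0 //.
exact/bernoulli/divr_gt0.
Qed.

Lemma powRN_mean4 (k t1 t2 t3 t4 : R) : 0 <= k ->
  0 < t1 -> 0 < t2 -> 0 < t3 -> 0 < t4 ->
  4 * ((t1 + t2 + t3 + t4) / 4) `^ (- k) <=
  t1 `^ (- k) + t2 `^ (- k) + t3 `^ (- k) + t4 `^ (- k).
Proof.
move=> k0 t10 t20 t30 t40; set m := (t1 + t2 + t3 + t4) / 4.
have m0 : 0 < m by rewrite divr_gt0 // !addr_gt0.
have mean : t1 / m + t2 / m + t3 / m + t4 / m = 4.
  by rewrite /m; field; rewrite gt_eqF // !addr_gt0.
have tangent t := @powRN_tangent k m t k0 m0.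
have := lerD (lerD (lerD (tangent _ t10) (tangent _ t20)) (tangent _ t30))
  (tangent _ t40).
apply: le_trans; rewrite -!mulrDr.
have -> : 1 - k * (t1 / m - 1) + (1 - k * (t2 / m - 1)) + (1 - k * (t3 / m - 1))
  + (1 - k * (t4 / m - 1)) = 4 - k * (t1 / m + t2 / m + t3 / m + t4 / m - 4) by ring.
by rewrite mean subrr mulr0 subr0 mulrC.
Qed.

Lemma chebyshev_sum4 (a1 a2 a3 a4 b1 b2 b3 b4 : R) :
  0 <= (a1 - a2) * (b1 - b2) -> 0 <= (a1 - a3) * (b1 - b3) ->
  0 <= (a1 - a4) * (b1 - b4) -> 0 <= (a2 - a3) * (b2 - b3) ->
  0 <= (a2 - a4) * (b2 - b4) -> 0 <= (a3 - a4) * (b3 - b4) ->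
  (a1 + a2 + a3 + a4) * (b1 + b2 + b3 + b4) <=
  4 * (a1 * b1 + a2 * b2 + a3 * b3 + a4 * b4).
Proof. by move=> *; nra. Qed.

Lemma antitone_mul_ge0 (f g : R -> R) (a u v : R) :
  (forall s t, a <= s -> s <= t -> f t <= f s) ->
  (forall s t, a <= s -> s <= t -> g t <= g s) ->
  a <= u -> a <= v -> 0 <= (f u - f v) * (g u - g v).
Proof.
move=> f_anti g_anti au av; have [uv|/ltW vu] := leP u v.
- by apply: mulr_ge0; rewrite subr_ge0; [exact: f_anti | exact: g_anti].
- rewrite -mulrNN !opprB; apply: mulr_ge0; rewrite subr_ge0.
    exact: f_anti.
  exact: g_anti.
Qed.

Lemma powRN_antitone (k d1 d2 : R) : 0 <= k -> 0 < d1 -> d1 <= d2 ->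
  d2 `^ (- k) <= d1 `^ (- k).
Proof.
move=> k0 d10 d12; have d20 := lt_le_trans d10 d12.
rewrite !powRN lef_pV2 ?posrE ?powR_gt0 //.
by apply: ge0_ler_powR => //; rewrite nnegrE ltW.
Qed.

Lemma powRN_sqr (k d : R) : 0 <= d -> d `^ (- k) = (d ^+ 2) `^ (- (k / 2)).
Proof.
move=> d0; rewrite -powR_mulrn // -powRrM; congr powR.
by rewrite mulrN mulrC divfK // pnatr_eq0.
Qed.

(* Jensen for the convex [s |-> s^(-k/2)] at the mean [m = D^2 + E^2 - h^2] of the
   squares [d_i^2], then [h^2 m <= D^2 E^2], i.e. [(D^2 - h^2) (E^2 - h^2) >= 0]. *)
Lemma powRN_mul_le_sum4 (k h D E d1 d2 d3 d4 : R) :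
  0 <= k -> 0 < h -> h <= D -> h <= E ->
  0 < d1 -> 0 < d2 -> 0 < d3 -> 0 < d4 ->
  d1 ^+ 2 + d2 ^+ 2 + d3 ^+ 2 + d4 ^+ 2 = 4 * (D ^+ 2 + E ^+ 2 - h ^+ 2) ->
  4 * (D `^ (- k) * E `^ (- k)) <=
  h `^ (- k) * (d1 `^ (- k) + d2 `^ (- k) + d3 `^ (- k) + d4 `^ (- k)).
Proof.
move=> k0 h0 hD hE d10 d20 d30 d40 sum_sqr.
set m := D ^+ 2 + E ^+ 2 - h ^+ 2.
have sqr_le d : h <= d -> h ^+ 2 <= d ^+ 2.
  by move=> hd; rewrite !expr2; apply: ler_pM => //; exact: ltW.
have hD2 := sqr_le _ hD; have hE2 := sqr_le _ hE.
have h20 : 0 < h ^+ 2 by rewrite exprn_gt0.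
have m0 : 0 < m by rewrite /m; lra.
have hm : h ^+ 2 * m <= D ^+ 2 * E ^+ 2.
  have : 0 <= (D ^+ 2 - h ^+ 2) * (E ^+ 2 - h ^+ 2) by rewrite mulr_ge0 ?subr_ge0.
  by rewrite /m; move: (h ^+ 2) (D ^+ 2) (E ^+ 2) => a b c; nra.
have jensen : 4 * m `^ (- (k / 2)) <=
    d1 `^ (- k) + d2 `^ (- k) + d3 `^ (- k) + d4 `^ (- k).
  have -> : m = (d1 ^+ 2 + d2 ^+ 2 + d3 ^+ 2 + d4 ^+ 2) / 4.
    by rewrite sum_sqr mulrAC divff ?mul1r // pnatr_eq0.
  rewrite (powRN_sqr k _ (ltW d10)) (powRN_sqr k _ (ltW d20)).
  rewrite (powRN_sqr k _ (ltW d30)) (powRN_sqr k _ (ltW d40)).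
  by apply: powRN_mean4; rewrite ?divr_ge0 ?exprn_gt0.
have prod : D `^ (- k) * E `^ (- k) <= h `^ (- k) * m `^ (- (k / 2)).
  rewrite (powRN_sqr k _ (ltW h0)) (powRN_sqr k _ (le_trans (ltW h0) hD)).
  rewrite (powRN_sqr k _ (le_trans (ltW h0) hE)).
  rewrite -!powRM ?sqr_ge0 ?(ltW m0) //.
  by apply: powRN_antitone; rewrite ?divr_ge0 ?mulr_gt0.
apply: (le_trans (ler_wpM2l _ prod)) => //.
by rewrite mulrCA ler_wpM2l ?powR_ge0.
Qed.

Lemma convex_on_mid {f : R -> R} {a b x : R} : convex_on f a b ->
  a <= x <= b -> a <= - x <= b -> f 0 <= (f x + f (- x)) / 2.
Proof.
move=> f_cvx hx hNx.
have half : 0 <= (2^-1 : R) <= 1 by apply/andP; split; lra.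
have := f_cvx x (- x) 2^-1 hx hNx half.
have -> : 2^-1 * x + (1 - 2^-1) * - x = 0 :> R by field.
by have -> : (f x + f (- x)) / 2 = 2^-1 * f x + (1 - 2^-1) * f (- x) by field.
Qed.

Lemma ler_divD1 (s t I J : R) : s <= t -> 0 <= I -> 0 <= J ->
  s * J <= t * I -> s / (I + 1) <= t / (J + 1).
Proof.
move=> st I0 J0 sJ_le.
rewrite ler_pdivrMr ?ltr_wpDl // mulrAC ler_pdivlMr ?ltr_wpDl //.
by rewrite !mulrDr !mulr1; lra.
Qed.

Lemma le_acos (u v : R) : -1 <= u -> u <= v -> v <= 1 -> acos v <= acos u.
Proof.
move=> u1 uv v1; rewrite leNgt; apply/negP => lt_uv.
have hu : -1 <= u <= 1 by rewrite u1 (le_trans uv v1).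
have hv : -1 <= v <= 1 by rewrite v1 (le_trans u1 uv).
have := @ltr_cos R (acos u) (acos v).
rewrite !in_itv /= !acos_ge0 // !acos_lepi // => /(_ isT isT) ltcos.
by move: lt_uv; rewrite -ltcos !acosK ?in_itv //= ltNge uv.
Qed.

End RealInequalities.

Lemma esumZl {R : realType} {T : choiceType} (S : set T) (k : R) (f : T -> \bar R) :
  0 < k -> (forall i, (0 <= f i)%E) ->
  (\esum_(i in S) (k%:E * f i) = k%:E * \esum_(i in S) f i)%E.
Proof.
move=> k0 f0; rewrite /esum -ereal_sup_pZl //; congr ereal_sup.
apply/seteqP; split => z.
- case=> A SA <-; exists (\sum_(x \in A) f x)%E; first by exists A.
  by rewrite ge0_mule_fsumr.
- by case=> _ [A SA <-] <-; exists A => //; rewrite ge0_mule_fsumr.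
Qed.

Lemma esumD1 {R : realType} {T : choiceType} (S : set T) (q : T) (f : T -> \bar R) :
  S q -> (forall i, S i -> (0 <= f i)%E) ->
  (\esum_(i in S) f i = f q + \esum_(i in S `\ q) f i)%E.
Proof.
move=> Sq f0; rewrite (esumID [set q]) // setDE.
have -> : S `&` [set q] = [set q] by apply/seteqP; split => x /=; [case=> _ ->|move=> ->].
by rewrite esum_set1 ?f0.
Qed.

Lemma set_bij_can {T U : Type} (A : set T) (B : set U) (f : T -> U) (g : U -> T) :
  {homo f : x / A x >-> B x} -> {homo g : y / B y >-> A y} ->
  cancel f g -> cancel g f -> set_bij A B f.
Proof.
move=> fAB gBA fK gK; split => //.
- by move=> x y _ _ /(can_inj fK).
- by move=> y By; exists (g y); [exact: gBA | exact: gK].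
Qed.

(* In units of [Delta/2] horizontally and [Delta sqrt 3/2] vertically the satellites
   sit at the integer points [(a, b)] with [a = b (mod 2)], and the squared horizontal
   distance becomes [X^2 + 3 Y^2]. *)
Section HexagonalReduction.
Context {R : realType}.

Lemma intr_cases (n : int) :
  n%:~R <= -2 :> R \/ n = -1 \/ n = 0 \/ n = 1 \/ 2 <= n%:~R :> R.
Proof.
have [n_le|[->|[->|[->|n_ge]]]] : (n <= -2 \/ n = -1 \/ n = 0 \/ n = 1 \/ 2 <= n)%R by lia.
- by left; rewrite -(ler_int R) in n_le.
- by right; left.
- by right; right; left.
- by right; right; right; left.
- by right; right; right; right; rewrite -(ler_int R) in n_ge.
Qed.

Lemma hex_round (X Y : R) : exists a b : int,
  (a - b = 0 %[mod 2])%Z /\ `|X - a%:~R| <= 1 /\ `|Y - b%:~R| <= 2^-1.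
Proof.
pose b := Num.floor (Y + 2^-1); pose m := Num.floor ((X - b%:~R + 1) / 2).
exists (b + 2 * m), b; split; first by lia.
have b_le := floor_le (Y + 2^-1); have b_gt := floorD1_gt (Y + 2^-1).
have m_le := floor_le ((X - b%:~R + 1) / 2).
have m_gt := floorD1_gt ((X - b%:~R + 1) / 2).
rewrite -/b -/m intrD in b_gt m_gt *; rewrite intrD intrM.
rewrite ler_pdivlMr // in m_le; rewrite ltr_pdivrMr // in m_gt.
by rewrite !ler_norml; split; apply/andP; split; lra.
Qed.

(* If the rounded point [(a, b)] is farther from [(a + t, b + u)] than the origin is,
   then [(a + t, b + u)] already lies in the central cell; routine case analysis on
   [a, b] in [<= -2], [-1], [0], [1], [>= 2]. *)
Lemma hex_round_fallback (a b : int) (t u : R) : `|t| <= 1 -> `|u| <= 2^-1 ->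
  a%:~R * (a%:~R + 2 * t) + 3 * (b%:~R * (b%:~R + 2 * u)) < 0 ->
  `|a%:~R + t| <= 1 /\ `|b%:~R + u| <= 1.
Proof.
rewrite !ler_norml => /andP[t1 t2] /andP[u1 u2].
case: (intr_cases a) => [ha|[->|[->|[->|ha]]]];
case: (intr_cases b) => [hb|[->|[->|[->|hb]]]] => q_lt0;
by split; apply/andP; split; nra.
Qed.

Lemma hex_reduce (X Y : R) : exists a b : int,
  [/\ (a - b = 0 %[mod 2])%Z, `|X - a%:~R| <= 1, `|Y - b%:~R| <= 1 &
      (X - a%:~R) ^+ 2 + 3 * (Y - b%:~R) ^+ 2 <= X ^+ 2 + 3 * Y ^+ 2].
Proof.
have [a [b [ab_even [ht hu]]]] := hex_round X Y.
set t := X - a%:~R in ht *; set u := Y - b%:~R in hu *.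
have [XE YE] : X = a%:~R + t /\ Y = b%:~R + u by rewrite /t /u; split; ring.
have [q_ge0|q_lt0] :=
  lerP 0 (a%:~R * (a%:~R + 2 * t) + 3 * (b%:~R * (b%:~R + 2 * u))).
- exists a, b; split => //; first by apply: le_trans hu _; lra.
  by rewrite XE YE; lra.
- have [hX hY] := @hex_round_fallback a b t u ht hu q_lt0.
  by exists 0, 0; rewrite !mulr0z !subr0 XE YE; split.
Qed.

End HexagonalReduction.

Section Downlink.
Context {R : realType} {Delta h alpha psd sigma2 : R} {ws wg : R -> R}.
Hypothesis h_gt0 : 0 < h.
Hypothesis alpha_ge0 : 0 <= alpha.
Hypothesis psd_sigma2_gt0 : 0 < psd / sigma2.
Hypothesis gain_gt0 : forall t : R, 0 <= t <= pi -> 0 < ws t * wg t.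
Hypothesis gain_antitone : forall a b : R, 0 <= a -> a <= b -> b <= pi ->
  ws b * wg b <= ws a * wg a.

Local Notation D := (Dist Delta h).
Local Notation snr := (SNR psd sigma2 alpha ws wg Delta h).
Local Notation inr_sum := (INR_sum psd sigma2 alpha ws wg Delta h).
Local Notation inr := (INR psd sigma2 alpha ws wg Delta h).
Local Notation sinr := (SINR psd sigma2 alpha ws wg Delta h).

Definition antenna_gain (d : R) : R := ws (acos (h / d)) * wg (acos (h / d)).

Definition link_gain (d : R) : R := psd / sigma2 * (d `^ (- alpha) * antenna_gain d).

Definition rx_power (p : int * int) (x y : R) : R := link_gain (D p.1 p.2 x y).

Lemma WgainE i j x y : Wgain ws wg Delta h i j x y = antenna_gain (D i j x y).
Proof. by []. Qed.

Lemma SNRE x y : snr x y = rx_power (0, 0) x y.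
Proof. by []. Qed.

Lemma INR_sumE x y : inr_sum x y = (\esum_(p in interferers) (rx_power p x y)%:E)%E.
Proof. by []. Qed.

Lemma Dist_sqr i j x y :
  D i j x y ^+ 2 = (sat_x Delta i - x) ^+ 2 + (sat_y Delta j - y) ^+ 2 + h ^+ 2.
Proof. by rewrite /Dist sqr_sqrtr // !addr_ge0 // sqr_ge0. Qed.

Lemma Dist_ge i j x y : h <= D i j x y.
Proof.
have D0 : 0 <= D i j x y by rewrite sqrtr_ge0.
have : h ^+ 2 <= D i j x y ^+ 2 by rewrite Dist_sqr lerDr addr_ge0 ?sqr_ge0.
by rewrite ler_sqr ?nnegrE // ltW.
Qed.

Lemma Dist00E x y : D 0 0 x y = Num.sqrt (x ^+ 2 + y ^+ 2 + h ^+ 2).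
Proof. by rewrite /Dist /sat_x /sat_y !mul0r !sub0r !sqrrN. Qed.

Lemma Dist_center : D 0 0 0 0 = h.
Proof. by rewrite Dist00E expr0n /= !add0r sqrtr_sqr ger0_norm // ltW. Qed.

Lemma Dist_oppx i j x y : D (- i) j x y = D i j (- x) y.
Proof. by rewrite /Dist /sat_x mulrNz; congr Num.sqrt; ring. Qed.

Lemma Dist_oppy i j x y : D i (- j) x y = D i j x (- y).
Proof. by rewrite /Dist /sat_y mulrNz; congr Num.sqrt; ring. Qed.

Lemma Dist_shift i j a b x y :
  D i j x y = D (i - a) (j - b) (x - sat_x Delta a) (y - sat_y Delta b).
Proof. by rewrite /Dist /sat_x /sat_y; congr Num.sqrt; rewrite !intrB; ring. Qed.

Lemma acos_ratio_ge0_lepi {d} : h <= d -> 0 <= acos (h / d) <= pi.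
Proof.
move=> hd; have d0 := lt_le_trans h_gt0 hd.
have ratio : -1 <= h / d <= 1.
  by rewrite ler_pdivrMr // mul1r hd andbT (le_trans _ (divr_ge0 (ltW h_gt0) (ltW d0))).
by rewrite acos_ge0 ?acos_lepi.
Qed.

Lemma antenna_gain_gt0 {d} : h <= d -> 0 < antenna_gain d.
Proof. by move=> hd; apply/gain_gt0/acos_ratio_ge0_lepi. Qed.

Lemma antenna_gain_antitone {d1 d2} : h <= d1 -> d1 <= d2 ->
  antenna_gain d2 <= antenna_gain d1.
Proof.
move=> hd1 d12; have hd2 := le_trans hd1 d12; have d10 := lt_le_trans h_gt0 hd1.
have /andP[theta1_ge0 _] := acos_ratio_ge0_lepi hd1.
have /andP[_ theta2_le] := acos_ratio_ge0_lepi hd2.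
apply: gain_antitone => //; apply: le_acos.
- by apply: le_trans (divr_ge0 (ltW h_gt0) (ltW (lt_le_trans d10 d12))).
- by rewrite ler_pM2l // lef_pV2 ?posrE ?(lt_le_trans d10).
- by rewrite ler_pdivrMr // mul1r.
Qed.

Lemma link_gain_gt0 {d} : h <= d -> 0 < link_gain d.
Proof.
move=> hd; rewrite /link_gain mulr_gt0 // mulr_gt0 ?antenna_gain_gt0 //.
by rewrite powR_gt0 // (lt_le_trans h_gt0).
Qed.

Lemma link_gain_antitone {d1 d2} : h <= d1 -> d1 <= d2 -> link_gain d2 <= link_gain d1.
Proof.
move=> hd1 d12; rewrite /link_gain ler_pM2l //.
apply: ler_pM.
- exact: powR_ge0.
- exact/ltW/antenna_gain_gt0/(le_trans hd1).
- by apply: powRN_antitone => //; apply: lt_le_trans hd1.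
- exact: antenna_gain_antitone.
Qed.

Lemma rx_power_gt0 p x y : 0 < rx_power p x y.
Proof. exact/link_gain_gt0/Dist_ge. Qed.

Lemma exists_cell (Delta_gt0 : 0 < Delta) x y : exists a b : int,
  [/\ (a - b = 0 %[mod 2])%Z,
      - (Delta / 2) <= x - sat_x Delta a <= Delta / 2,
      - (Delta * Num.sqrt 3 / 2) <= y - sat_y Delta b <= Delta * Num.sqrt 3 / 2 &
      D 0 0 (x - sat_x Delta a) (y - sat_y Delta b) <= D 0 0 x y].
Proof.
set c := Delta / 2; set s := Delta * Num.sqrt 3 / 2.
have c0 : 0 < c by rewrite divr_gt0.
have s0 : 0 < s by rewrite !mulr_gt0 ?sqrtr_gt0.
have sE : s ^+ 2 = 3 * c ^+ 2.
  by rewrite /s /c !exprMn sqr_sqrtr ?ler0n //; field.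
have [a [b [ab_even ha hb hab]]] := hex_reduce (x / c) (y / s).
have xE : x - sat_x Delta a = c * (x / c - a%:~R).
  by rewrite /sat_x /c; field; rewrite gt_eqF.
have yE : y - sat_y Delta b = s * (y / s - b%:~R).
  by rewrite /sat_y /s; field; rewrite !gt_eqF // sqrtr_gt0.
have scaled_le (k z : R) : 0 < k -> `|z| <= 1 -> - k <= k * z <= k.
  by move=> k0; rewrite ler_norml => /andP[z1 z2]; apply/andP; split; nra.
exists a, b; split => //; rewrite ?xE ?yE ?scaled_le //.
rewrite !Dist00E ler_sqrt ?addr_ge0 ?sqr_ge0 // lerD2r.
have xE2 : x ^+ 2 = c ^+ 2 * (x / c) ^+ 2 by rewrite -exprMn mulrC divfK ?gt_eqF.
have yE2 : y ^+ 2 = 3 * c ^+ 2 * (y / s) ^+ 2.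
  by rewrite -sE -exprMn mulrC divfK ?gt_eqF.
have := ler_wpM2l (ltW (exprn_gt0 2 c0)) hab.
by rewrite (exprMn _ c) (exprMn _ s) sE xE2 yE2; lra.
Qed.

Lemma lattice_bij_shift a b : lattice (a, b) ->
  set_bij lattice lattice (fun p : int * int => (p.1 - a, p.2 - b)).
Proof.
rewrite /lattice /= => ab_even.
apply: set_bij_can (fun p => (p.1 + a, p.2 + b)) _ _ _ _.
- by case=> i j /=; lia.
- by case=> i j /=; lia.
- by case=> i j /=; rewrite !subrK.
- by case=> i j /=; rewrite !addrK.
Qed.

(* A lattice translation only relabels the satellites. *)
Lemma total_power_shift a b x y : lattice (a, b) ->
  (\esum_(p in lattice) (rx_power p x y)%:E =
   \esum_(p in lattice) (rx_power p (x - sat_x Delta a) (y - sat_y Delta b))%:E)%E.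
Proof.
move=> ab_even; rewrite [RHS](reindex_esum _ _ _ _ (lattice_bij_shift _ _ ab_even)).
by apply: eq_esum => p _; rewrite /rx_power (Dist_shift p.1 p.2 a b).
Qed.

Lemma total_power_split x y :
  (\esum_(p in lattice) (rx_power p x y)%:E = (snr x y)%:E + inr_sum x y)%E.
Proof.
rewrite (@esumD1 _ _ _ (0, 0)) ?SNRE ?INR_sumE // => p _.
by rewrite lee_fin; exact/ltW/rx_power_gt0.
Qed.

Hypothesis INR_sum_finite : forall x y : R, (inr_sum x y < +oo)%E.

Lemma INR_sum_finE x y : inr_sum x y = (inr x y)%:E.
Proof.
have I0 : (0 <= inr_sum x y)%E.
  by apply: esum_ge0 => p _; rewrite lee_fin; exact/ltW/rx_power_gt0.
by rewrite fineK // ge0_fin_numE.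
Qed.

Lemma INR_ge0 x y : 0 <= inr x y.
Proof.
rewrite -lee_fin -INR_sum_finE.
by apply: esum_ge0 => p _; rewrite lee_fin; exact/ltW/rx_power_gt0.
Qed.

Lemma SINR_shift_le a b x y : lattice (a, b) ->
  D 0 0 (x - sat_x Delta a) (y - sat_y Delta b) <= D 0 0 x y ->
  sinr x y <= sinr (x - sat_x Delta a) (y - sat_y Delta b).
Proof.
move=> ab_even closer; set x' := x - _ in closer *; set y' := y - _ in closer *.
have total : snr x y + inr x y = snr x' y' + inr x' y'.
  apply: EFin_inj; rewrite !EFinD -!INR_sum_finE -!total_power_split.
  exact: total_power_shift.
have snr_le : snr x y <= snr x' y'.
  by rewrite !SNRE; apply: link_gain_antitone; rewrite ?Dist_ge.
have snr_ge0 : 0 <= snr x y by rewrite SNRE; exact/ltW/rx_power_gt0.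
have inr'_ge0 := INR_ge0 x' y'.
by apply: ler_divD1; rewrite ?INR_ge0 //; nra.
Qed.

Hypothesis ratio_convex_x : forall i j : int, (i - j = 0 %[mod 2])%Z ->
  forall y : R, - (Delta * Num.sqrt 3 / 2) <= y <= Delta * Num.sqrt 3 / 2 ->
  convex_on (fun x => Wgain ws wg Delta h i j x y / Wgain ws wg Delta h 0 0 x y)
            (- (Delta / 2)) (Delta / 2).
Hypothesis ratio_convex_y : forall i j : int, (i - j = 0 %[mod 2])%Z ->
  forall x : R, - (Delta / 2) <= x <= Delta / 2 ->
  convex_on (fun y => Wgain ws wg Delta h i j x y / Wgain ws wg Delta h 0 0 x y)
            (- (Delta * Num.sqrt 3 / 2)) (Delta * Num.sqrt 3 / 2).

Section Cell.
Variables (i j : int) (x y : R).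
Hypothesis ij_even : (i - j = 0 %[mod 2])%Z.
Hypothesis x_cell : - (Delta / 2) <= x <= Delta / 2.
Hypothesis y_cell : - (Delta * Num.sqrt 3 / 2) <= y <= Delta * Num.sqrt 3 / 2.

Let mirror_sum (f : R -> R) :=
  f (D i j x y) + f (D i j (- x) y) + f (D i j x (- y)) + f (D i j (- x) (- y)).

(* Midpoint convexity in [x] at heights [y] and [-y], then in [y] at [x = 0]. *)
Lemma antenna_gain_mirror :
  4 * antenna_gain (D 0 0 x y) * antenna_gain (D i j 0 0) <=
  antenna_gain h * mirror_sum antenna_gain.
Proof.
have sym_interval (c z : R) : - c <= z <= c -> - c <= - z <= c.
  by move=> /andP[? ?]; apply/andP; split; lra.
have zero_cell : - (Delta / 2) <= 0 <= Delta / 2.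
  by move: x_cell => /andP[? ?]; apply/andP; split; lra.
have Nx_cell := sym_interval _ _ x_cell; have Ny_cell := sym_interval _ _ y_cell.
have D0_oppx u v : D 0 0 (- u) v = D 0 0 u v by rewrite !Dist00E sqrrN.
have D0_oppy u v : D 0 0 u (- v) = D 0 0 u v by rewrite !Dist00E sqrrN.
have cx1 := convex_on_mid (ratio_convex_x _ _ ij_even _ y_cell) x_cell Nx_cell.
have cx2 := convex_on_mid (ratio_convex_x _ _ ij_even _ Ny_cell) x_cell Nx_cell.
have cy := convex_on_mid (ratio_convex_y _ _ ij_even _ zero_cell) y_cell Ny_cell.
move: cx1 cx2 cy; rewrite /= !WgainE !D0_oppx !D0_oppy Dist_center /mirror_sum.
set G := antenna_gain => cx1 cx2 cy.
have G0 := antenna_gain_gt0 (Dist_ge 0 0 x y); have Gh := antenna_gain_gt0 (lexx h).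
have : 4 * (G (D i j 0 0) / G h) <= mirror_sum G / G (D 0 0 x y).
  by rewrite /mirror_sum !mulrDl; lra.
rewrite ler_pdivlMr // => cvx.
have -> : 4 * G (D 0 0 x y) * G (D i j 0 0) =
    G h * (4 * (G (D i j 0 0) / G h) * G (D 0 0 x y)) by field; rewrite gt_eqF.
by rewrite ler_pM2l.
Qed.

(* Both factors of [link_gain] decrease with the distance, so Chebyshev's sum
   inequality lets the antenna and path-loss bounds be multiplied. *)
Lemma link_gain_mirror :
  4 * link_gain (D 0 0 x y) * link_gain (D i j 0 0) <=
  link_gain h * mirror_sum link_gain.
Proof.
have antenna := antenna_gain_mirror; rewrite /mirror_sum in antenna *.
set d1 := D i j x y in antenna *; set d2 := D i j (- x) y in antenna *.
set d3 := D i j x (- y) in antenna *; set d4 := D i j (- x) (- y) in antenna *.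
set D0 := D 0 0 x y in antenna *; set Dp := D i j 0 0 in antenna *.
set P := fun d : R => d `^ (- alpha); set G := antenna_gain in antenna *.
have d_gt0 d : h <= d -> 0 < d := lt_le_trans h_gt0.
have pathloss : 4 * (P D0 * P Dp) <= P h * (P d1 + P d2 + P d3 + P d4).
  apply: powRN_mul_le_sum4; rewrite ?d_gt0 ?Dist_ge //.
  by rewrite !Dist_sqr /sat_x /sat_y !mul0r; ring.
have chebyshev : (P d1 + P d2 + P d3 + P d4) * (G d1 + G d2 + G d3 + G d4) <=
    4 * (P d1 * G d1 + P d2 * G d2 + P d3 * G d3 + P d4 * G d4).
  have P_anti s t : h <= s -> s <= t -> P t <= P s.
    by move=> hs st; apply: powRN_antitone => //; exact: d_gt0.
  have sim u v : h <= u -> h <= v -> 0 <= (P u - P v) * (G u - G v).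
    exact: antitone_mul_ge0 P_anti (fun s t => @antenna_gain_antitone s t).
  by apply: chebyshev_sum4; apply: sim; exact: Dist_ge.
have P_ge0 d : 0 <= P d by exact: powR_ge0.
have G_ge0 d : h <= d -> 0 <= G d by move=> hd; exact/ltW/antenna_gain_gt0.
have G0_ge0 := G_ge0 _ (Dist_ge 0 0 x y); have Gp_ge0 := G_ge0 _ (Dist_ge i j 0 0).
rewrite -mulrA in antenna.
have product := ler_pM (mulr_ge0 (ler0n _ 4) (mulr_ge0 (P_ge0 D0) (P_ge0 Dp)))
  (mulr_ge0 (ler0n _ 4) (mulr_ge0 G0_ge0 Gp_ge0)) pathloss antenna.
have cheb_h := ler_wpM2l (mulr_ge0 (P_ge0 h) (G_ge0 _ (lexx h))) chebyshev.
have key : 4 * (P D0 * P Dp * (G D0 * G Dp)) <=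
    P h * G h * (P d1 * G d1 + P d2 * G d2 + P d3 * G d3 + P d4 * G d4) by nra.
have -> : 4 * link_gain D0 * link_gain Dp =
    (psd / sigma2) ^+ 2 * (4 * (P D0 * P Dp * (G D0 * G Dp))).
  by rewrite /link_gain /P /G; ring.
have -> : link_gain h * (link_gain d1 + link_gain d2 + link_gain d3 + link_gain d4) =
    (psd / sigma2) ^+ 2 *
    (P h * G h * (P d1 * G d1 + P d2 * G d2 + P d3 * G d3 + P d4 * G d4)).
  by rewrite /link_gain /P /G; ring.
by rewrite ler_wpM2l // sqr_ge0.
Qed.

End Cell.

Lemma interferers_bij_oppx :
  set_bij interferers interferers (fun p : int * int => (- p.1, p.2)).
Proof.
apply: set_bij_can (fun p : int * int => (- p.1, p.2)) _ _ _ _;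
  try by case=> i j; rewrite /= opprK.
all: case=> i j [/= ij_even ij_ne0]; split; first (rewrite /lattice /= in ij_even *; lia).
all: by move=> [iE jE]; apply: ij_ne0; rewrite -[i]opprK iE jE.
Qed.

Lemma interferers_bij_oppy :
  set_bij interferers interferers (fun p : int * int => (p.1, - p.2)).
Proof.
apply: set_bij_can (fun p : int * int => (p.1, - p.2)) _ _ _ _;
  try by case=> i j; rewrite /= opprK.
all: case=> i j [/= ij_even ij_ne0]; split; first (rewrite /lattice /= in ij_even *; lia).
all: by move=> [iE jE]; apply: ij_ne0; rewrite -[j]opprK iE jE.
Qed.

Lemma INR_sum_oppx x y : inr_sum (- x) y = inr_sum x y.
Proof.
rewrite !INR_sumE (reindex_esum _ _ _ _ interferers_bij_oppx).
by apply: eq_esum => p _; rewrite /rx_power /= Dist_oppx opprK.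
Qed.

Lemma INR_sum_oppy x y : inr_sum x (- y) = inr_sum x y.
Proof.
rewrite !INR_sumE (reindex_esum _ _ _ _ interferers_bij_oppy).
by apply: eq_esum => p _; rewrite /rx_power /= Dist_oppy opprK.
Qed.

Section CellBound.
Variables (x y : R).
Hypothesis x_cell : - (Delta / 2) <= x <= Delta / 2.
Hypothesis y_cell : - (Delta * Num.sqrt 3 / 2) <= y <= Delta * Num.sqrt 3 / 2.

(* Sum [link_gain_mirror] over the interferers: the four mirrored interference
   sums coincide by the symmetries of the lattice. *)
Lemma cell_interference_bound :
  link_gain (D 0 0 x y) * inr 0 0 <= link_gain h * inr x y.
Proof.
set F0 := link_gain (D 0 0 x y); set Fh := link_gain h.
have F0_gt0 : 0 < F0 by exact/link_gain_gt0/Dist_ge.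
have Fh_gt0 : 0 < Fh by exact/link_gain_gt0.
have mirror : ((4 * F0 / Fh)%:E * inr_sum 0 0 <=
    inr_sum x y + inr_sum (- x) y + inr_sum x (- y) + inr_sum (- x) (- y))%E.
  have k_gt0 : 0 < 4 * F0 / Fh by rewrite divr_gt0 // mulr_gt0.
  have rx_ge0 p u v : (0 <= (rx_power p u v)%:E)%E.
    by rewrite lee_fin; exact/ltW/rx_power_gt0.
  rewrite !INR_sumE -esumZl // -!esumD => [|p _|p _|p _|p _|p _|p _]; rewrite ?adde_ge0 //.
  apply: le_esum => -[i j] [/= ij_even _]; rewrite -!EFinD -EFinM lee_fin.
  rewrite /rx_power /= mulrAC ler_pdivrMr // [X in _ <= X]mulrC.
  exact: link_gain_mirror _ _ _ _ ij_even x_cell y_cell.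
move: mirror; rewrite !INR_sum_oppy !INR_sum_oppx !INR_sum_finE -!EFinD -EFinM.
rewrite lee_fin => mirror.
have -> : F0 * inr 0 0 = Fh / 4 * (4 * F0 / Fh * inr 0 0) by field; rewrite gt_eqF.
have -> : Fh * inr x y = Fh / 4 * (inr x y + inr x y + inr x y + inr x y) by field.
by rewrite ler_pM2l // divr_gt0.
Qed.

Lemma cell_SINR_le : sinr x y <= sinr 0 0.
Proof.
rewrite /SINR !SNRE /rx_power /= Dist_center.
apply: ler_divD1; rewrite ?INR_ge0 //.
- exact: link_gain_antitone (Dist_ge 0 0 x y).
- exact: cell_interference_bound.
Qed.

End CellBound.

End Downlink.

Theorem proposition2 (R : realType) (Delta h alpha psd sigma2 : R)
  (ws wg : R -> R)
  (hDelta : 0 < Delta) (hh : 0 < h) (halpha : 2 <= alpha)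
  (hpsd : 0 < psd) (hsigma : 0 < sigma2)
  (hws : forall t, 0 <= t <= pi -> 0 < ws t <= 1)
  (hwg : forall t, 0 <= t <= pi -> 0 < wg t <= 1)
  (hfinite : forall x y : R,
     (INR_sum psd sigma2 alpha ws wg Delta h x y < +oo)%E)
  (hmono : forall a b : R, 0 <= a -> a <= b -> b <= pi ->
     ws b * wg b <= ws a * wg a)
  (hconvx : forall i j : int, (i - j = 0 %[mod 2])%Z ->
     forall y : R, - (Delta * Num.sqrt 3 / 2) <= y <= Delta * Num.sqrt 3 / 2 ->
     convex_on (fun x => Wgain ws wg Delta h i j x y / Wgain ws wg Delta h 0 0 x y)
               (- (Delta / 2)) (Delta / 2))
  (hconvy : forall i j : int, (i - j = 0 %[mod 2])%Z ->
     forall x : R, - (Delta / 2) <= x <= Delta / 2 ->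
     convex_on (fun y => Wgain ws wg Delta h i j x y / Wgain ws wg Delta h 0 0 x y)
               (- (Delta * Num.sqrt 3 / 2)) (Delta * Num.sqrt 3 / 2)) :
  forall x y : R,
    SINR psd sigma2 alpha ws wg Delta h x y <= SINR psd sigma2 alpha ws wg Delta h 0 0.
Proof.
move=> x y.
have alpha_ge0 : 0 <= alpha by apply: le_trans halpha.
have psd_sigma2_gt0 : 0 < psd / sigma2 by rewrite divr_gt0.
have gain_gt0 (t : R) : 0 <= t <= pi -> 0 < ws t * wg t.
  by move=> /[dup] /hws /andP[ws_gt0 _] /hwg /andP[wg_gt0 _]; rewrite mulr_gt0.
have [a [b [ab_even x_cell y_cell closer]]] := exists_cell (h := h) hDelta x y.
apply: le_trans (SINR_shift_le hh alpha_ge0 psd_sigma2_gt0 gain_gt0 hmono hfinite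
  _ _ _ _ ab_even closer) _.
exact: cell_SINR_le hh alpha_ge0 psd_sigma2_gt0 gain_gt0 hmono hfinite hconvx hconvy
  _ _ x_cell y_cell.
Qed.
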